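(* Let $\sigma\neq0$, let $T$ be the shift operator $(Tf)(x)=f(x+\sigma)$ acting on polynomials in $x$, and let $\Delta=\frac{1}{\sigma}\sum_{k=l}^{m}a_kT^k$ (integers $l<m$) with $\sum_{k=l}^m a_k=0$ and $\sum_{k=l}^m k a_k=1$. Let $\beta=\big(\sum_{k=l}^m a_k k T^k\big)^{-1}$ be its conjugate operator, and for $n\ge 1$ let $P_n(x)=(x\beta)^n\cdot 1$, i.e. the result of applying $n$ times the operator ''apply $\beta$, then multiply by $x$'' to the constant function $1$. Then $P_n$ is a well-defined polynomial in $x$ of degree $n$ of the form $$P_n(x)=\sum_{k=1}^{n}A_k\,\sigma^{n-k}x^k,\qquad A_n=1,$$ where all coefficients $A_k$ are finite numbers depending only on the coefficients $a_l,\dots,a_m$ and not on $\sigma$.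
   Context: Here $x$ denotes the operator of multiplication by $x$. The sequence $P_n$ (with $P_0=1$) is the basic sequence of $\Delta$, satisfying $\Delta P_n=nP_{n-1}$. *)

From HB Require Import structures.
From mathcomp Require Import all_boot all_order all_algebra.
Set Implicit Arguments. Unset Strict Implicit. Unset Printing Implicit Defensive.
Import Order.TTheory GRing.Theory Num.Theory.
Local Open Scope ring_scope.

(* Sum over the integer range k = l, l+1, ..., m (assumes l <= m). *)
Definition zsum (R : nmodType) (l m : int) (F : int -> R) : R :=
  \sum_(i < `|m - l|%N.+1) F (l + (i : nat)%:Z).

Definition shiftk (R : comRingType) (sigma : R) (k : int) (p : {poly R}) : {poly R} :=
  p \Po ('X + (k%:~R * sigma)%:P).

(* The operator  sum_{k=l}^m a_k k T^k , whose inverse is the conjugate operator beta. *)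
Definition conjinv (R : comRingType) (sigma : R) (l m : int) (a : int -> R)
  (p : {poly R}) : {poly R} :=
  zsum l m (fun k => (a k * k%:~R) *: shiftk sigma k p).

Fixpoint Pbasic (R : comRingType) (beta : {poly R} -> {poly R}) (n : nat) : {poly R} :=
  match n with
  | 0 => 1
  | n'.+1 => 'X * beta (Pbasic beta n')
  end.

From HB Require Import structures.
From mathcomp Require Import all_boot all_order all_algebra.
Set Implicit Arguments.
Unset Strict Implicit.
Unset Printing Implicit Defensive.

Import Order.TTheory GRing.Theory Num.Theory.
Local Open Scope ring_scope.

(* Because sum_k k a_k = 1 and every shift preserves degree and leading
   coefficient, L_sigma = sum_k a_k k T^k is the identity plus a degree-lowering
   map.  Such a linear map is bijective and, like its inverse beta, preserves
   degree and leading coefficient; hence P_n is monic of degree n.  The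
   dilation p(x) |-> p(sigma x) intertwines L_sigma with L_1, hence beta_sigma
   with beta_1, so P_n(sigma x) = sigma^n P^(1)_n(x): the A_k are the
   coefficients of P^(1)_n, computed for sigma = 1. *)

Lemma size_polyB_lead_lt (R : nzRingType) (p q : {poly R}) :
  p != 0 -> size q = size p -> lead_coef q = lead_coef p ->
  (size (q - p)%R < size p)%N.
Proof.
move=> p0 sq lq; rewrite (polySpred p0) ltnS; apply/leq_sizeP => j.
rewrite leq_eqVlt => /predU1P[<- | ltj].
  by rewrite coefB -{1}sq -!lead_coefE lq subrr.
rewrite -(polySpred p0) in ltj.
by rewrite coefB !nth_default ?subrr ?sq.
Qed.

Section UnitriangularPolyMap.
Variables (R : nzRingType) (L : {linear {poly R} -> {poly R}}).
Hypothesis size_L_sub : forall p, p != 0 -> (size (L p - p)%R < size p)%N.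

Lemma size_unitri p : size (L p) = size p.
Proof.
have [->|p0] := eqVneq p 0; first by rewrite linear0.
by rewrite -[L p](subrK p) addrC size_polyDl ?size_L_sub.
Qed.

Lemma lead_coef_unitri p : lead_coef (L p) = lead_coef p.
Proof.
have [->|p0] := eqVneq p 0; first by rewrite linear0.
by rewrite -[L p](subrK p) addrC lead_coefDl ?size_L_sub.
Qed.

Lemma unitri_inj : injective L.
Proof.
move=> p q Lpq; apply/eqP; rewrite -subr_eq0; apply/negPn/negP => /size_L_sub.
by rewrite linearB /= Lpq subrr sub0r size_polyN ltnn.
Qed.

Lemma unitri_surj q : exists p, L p = q.
Proof.
elim: {q}(size q).+1 {-2}q (ltnSn (size q)) => // n IH q; rewrite ltnS => sq.
have [->|q0] := eqVneq q 0; first by exists 0; rewrite linear0.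
have [r Lr] : exists r, L r = q - L q.
  by apply: IH; rewrite -opprB size_polyN (leq_trans (size_L_sub q0)).
by exists (q + r); rewrite linearD Lr addrC subrK.
Qed.

Lemma unitri_bij : bijective L.
Proof.
have surjL q : exists p, L p == q by have [p <-] := unitri_surj q; exists p.
exists (fun q => xchoose (surjL q)) => [p|q]; last exact/eqP/(xchooseP (surjL q)).
exact/unitri_inj/eqP/(xchooseP (surjL (L p))).
Qed.

Lemma size_unitri_inv beta : cancel beta L -> forall q, size (beta q) = size q.
Proof. by move=> betaK q; rewrite -[in RHS](betaK q) size_unitri. Qed.

Lemma lead_coef_unitri_inv beta :
  cancel beta L -> forall q, lead_coef (beta q) = lead_coef q.
Proof. by move=> betaK q; rewrite -[in RHS](betaK q) lead_coef_unitri. Qed.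

End UnitriangularPolyMap.

Section BasicSequence.
Variables (R : comNzRingType) (beta : {poly R} -> {poly R}).

Lemma size_Pbasic :
  (forall p, size (beta p) = size p) -> forall n, size (Pbasic beta n) = n.+1.
Proof.
move=> size_beta; elim=> [|n IH] /=; first by rewrite size_poly1.
by rewrite mulrC size_mulX -?size_poly_gt0 size_beta IH.
Qed.

Lemma lead_coef_Pbasic :
  (forall p, lead_coef (beta p) = lead_coef p) -> forall n, lead_coef (Pbasic beta n) = 1.
Proof.
move=> lead_beta; elim=> [|n IH] /=; first by rewrite lead_coef1.
by rewrite mulrC lead_coefMX lead_beta IH.
Qed.

Lemma Pbasic_comp_scaleX (sigma : R) (b : {poly R} -> {poly R}) :
  (forall p, beta p \Po (sigma *: 'X) = b (p \Po (sigma *: 'X))) -> scalable b ->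
  forall n, Pbasic beta n \Po (sigma *: 'X) = sigma ^+ n *: Pbasic b n.
Proof.
move=> beta_comp_scaleX bZ; elim=> [|n IH] /=; first by rewrite comp_polyC scale1r.
rewrite comp_polyM comp_polyX beta_comp_scaleX IH bZ.
by rewrite -scalerAr -scalerAl scalerA exprSr.
Qed.

End BasicSequence.

Lemma coef_comp_poly_scaleX (R : comNzRingType) (c : R) (p : {poly R}) i :
  (p \Po (c *: 'X))`_i = c ^+ i * p`_i.
Proof.
rewrite comp_polyE.
under eq_bigr => j _ do rewrite exprZn scalerA.
rewrite -(poly_def _ (fun j => p`_j * c ^+ j)) coef_poly mulrC.
case: ltnP => // le_p_i.
by rewrite nth_default ?mulr0.
Qed.

Lemma eq_poly_comp_scaleX (R : idomainType) (sigma : R) (p q : {poly R}) n :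
  sigma != 0 -> (size q <= n.+1)%N -> p \Po (sigma *: 'X) = sigma ^+ n *: q ->
  p = \poly_(k < n.+1) (q`_k * sigma ^+ (n - k)).
Proof.
move=> s0 sq pq; apply/polyP => k; have := congr1 (fun r : {poly R} => r`_k) pq.
rewrite coef_comp_poly_scaleX coefZ coef_poly; case: ltnP => [ltkn | lenk].
  rewrite -(subnKC (ltnSE ltkn)) exprD -mulrA => /(mulfI (expf_neq0 k s0)).
  by rewrite addKn mulrC.
rewrite [q`_k]nth_default ?(leq_trans sq) // mulr0 => /eqP.
by rewrite mulf_eq0 expf_eq0 (negPf s0) andbF => /eqP.
Qed.

Section ConjugateOperator.
Variables (R : idomainType) (l m : int) (a : int -> R).

Fact conjinv_is_linear (sigma : R) : linear (conjinv sigma l m a).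
Proof.
move=> c p q; rewrite /conjinv /zsum scaler_sumr -big_split.
apply: eq_bigr => i _ /=.
by rewrite /shiftk linearP scalerDr !scalerA mulrC.
Qed.

HB.instance Definition _ sigma :=
  GRing.isLinear.Build R {poly R} {poly R} _ (conjinv sigma l m a)
    (conjinv_is_linear sigma).

Lemma size_shiftk_sub (sigma : R) (k : int) (p : {poly R}) :
  p != 0 -> (size (shiftk sigma k p - p)%R < size p)%N.
Proof.
move=> p0; apply: size_polyB_lead_lt => //; first by rewrite size_comp_poly2 ?size_XaddC.
by rewrite lead_coef_comp ?size_XaddC // lead_coefXaddC expr1n mulr1.
Qed.

Hypothesis sum_ka : zsum l m (fun k => k%:~R * a k) = 1.

Lemma size_conjinv_sub (sigma : R) (p : {poly R}) :
  p != 0 -> (size (conjinv sigma l m a p - p)%R < size p)%N.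
Proof.
move=> p0; rewrite -[p in _ - p]scale1r -sum_ka /conjinv /zsum.
rewrite scaler_suml -sumrB.
apply: (big_ind (fun q : {poly R} => size q < size p)%N) => [|q r sq sr|i _].
- by rewrite size_poly0 size_poly_gt0.
- by rewrite (leq_ltn_trans (size_polyD _ _)) // gtn_max sq.
- by rewrite mulrC -scalerBr (leq_ltn_trans (size_scale_leq _ _)) ?size_shiftk_sub.
Qed.

Lemma shiftk_comp_scaleX (sigma : R) (k : int) (p : {poly R}) :
  shiftk sigma k p \Po (sigma *: 'X) = shiftk 1 k (p \Po (sigma *: 'X)).
Proof.
rewrite /shiftk -!comp_polyA; congr (p \Po _).
rewrite comp_polyD comp_polyX comp_polyC comp_polyZ comp_polyX scalerDr.
by rewrite scale_polyC mulr1 mulrC.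
Qed.

Lemma conjinv_comp_scaleX (sigma : R) (p : {poly R}) :
  conjinv sigma l m a p \Po (sigma *: 'X) = conjinv 1 l m a (p \Po (sigma *: 'X)).
Proof.
rewrite /conjinv /zsum linear_sum; apply: eq_bigr => i _.
by rewrite linearZ /= shiftk_comp_scaleX.
Qed.

End ConjugateOperator.

Theorem theorem2p4 (R : numFieldType) (l m : int) (a : int -> R) :
  l < m ->
  zsum l m a = 0 ->
  zsum l m (fun k => k%:~R * a k) = 1 ->
  exists A : nat -> nat -> R,
    (forall n : nat, (0 < n)%N -> A n n = 1) /\
    forall sigma : R, sigma != 0 ->
      (exists beta : {poly R} -> {poly R},
          cancel (conjinv sigma l m a) beta /\ cancel beta (conjinv sigma l m a)) /\
      forall beta : {poly R} -> {poly R},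
        cancel (conjinv sigma l m a) beta -> cancel beta (conjinv sigma l m a) ->
        forall n : nat, (0 < n)%N ->
          Pbasic beta n = \sum_(1 <= k < n.+1) (A n k * sigma ^+ (n - k)) *: 'X^k
          /\ size (Pbasic beta n) = n.+1.
Proof.
move=> _ _ sum_ka.
have conjinv_unitri sigma := size_conjinv_sub sum_ka sigma.
have [b1 b1K Kb1] := unitri_bij (conjinv_unitri 1).
have size_P1 := size_Pbasic (size_unitri_inv (conjinv_unitri 1) Kb1).
exists (fun n k => (Pbasic b1 n)`_k); split.
  move=> n _; rewrite -(lead_coef_Pbasic (lead_coef_unitri_inv (conjinv_unitri 1) Kb1) n).
  by rewrite lead_coefE size_P1.
move=> sigma s0; split.
  by have [b bK Kb] := unitri_bij (conjinv_unitri sigma); exists b.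
move=> beta betaK Kbeta n n0.
have Pn_comp_scaleX : Pbasic beta n \Po (sigma *: 'X) = sigma ^+ n *: Pbasic b1 n.
  apply: Pbasic_comp_scaleX; last exact: can2_scalable b1K Kb1.
  by move=> p; rewrite -[p in RHS]Kbeta conjinv_comp_scaleX b1K.
split; last first.
  have size_sX : size (sigma *: 'X) = 2 by rewrite size_scale ?size_polyX.
  by rewrite -(size_comp_poly2 _ size_sX) Pn_comp_scaleX size_scale ?expf_neq0 ?size_P1.
pose F k := ((Pbasic b1 n)`_k * sigma ^+ (n - k)) *: 'X^k.
rewrite (eq_poly_comp_scaleX s0 _ Pn_comp_scaleX) ?size_P1 //.
rewrite poly_def -(big_mkord xpredT F) big_ltn // /F.
by case: n n0 {Pn_comp_scaleX F} => // n _; rewrite /= coefXM mul0r scale0r add0r.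
Qed.
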